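(* Let $T\in K\{X\}_\infty$ be a monomial. Then $$\Delta_a(T)=\sum_{I\subseteq\mathrm{Le}(T)}\mathrm{red}(T|I)\otimes\mathrm{red}(T|I^c),$$ where $I^c=\mathrm{Le}(T)\setminus I$. The same formula holds for the restriction of $\Delta_a$ to $K\{X\}$ and $T\in K\{X\}$ a monomial.
   Context: $K$ is a field of characteristic $0$ and $X=\{x_1,x_2,\dots\}$ a finite or countable set of variables. A planar rooted tree is reduced if no vertex has exactly one incoming edge. $K\{X\}_\infty$ has basis the monomials: the empty tree $1$ and all planar reduced rooted trees with leaves labelled by elements of $X$; for $k\ge2$, $\vee^k$ grafts $k$ nonempty trees (in order) onto a new root, extended multilinearly, with unit conventions (arguments $1$ omitted, $\vee^1=\mathrm{id}$, $\vee^k(1,\dots,1)=1$). $K\{X\}$ is the span of $1$ and the binary trees. $K\{X\}_\infty\otimes K\{X\}_\infty$ carries the operations componentwise ($\vee^k(a_1\otimes b_1,\dots,a_k\otimes b_k)=\vee^k(a_1,\dots,a_k)\otimes\vee^k(b_1,\dots,b_k)$), and $\Delta_a$ is the unique unital homomorphism for the $\vee^k$ with $\Delta_a(x_i)=x_i\otimes1+1\otimes x_i$. $\mathrm{Le}(T)$ is the set of leaves of $T$. For $I\subseteq\mathrm{Le}(T)$, the leaf-restriction $T|I$ is obtained from $T$ by deleting every vertex whose full subtree (the vertex and all its descendants) contains no leaf of $I$ (it is the empty tree $1$ if $I=\emptyset$); the reduction $\mathrm{red}(S)$ of a labelled tree $S$ is obtained by deleting all vertices with exactly one child, the remaining vertices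 keeping their labels and the descendant relation (so $v'$ is a descendant of $v$ in $\mathrm{red}(S)$ iff it is in $S$), and keeping the planar order. *)

From HB Require Import structures.
From mathcomp Require Import all_boot all_order all_algebra.
Set Implicit Arguments. Unset Strict Implicit. Unset Printing Implicit Defensive.
Import GRing.Theory.
Local Open Scope ring_scope.

Inductive ptree (X : Type) := Leaf of X | Node of seq (ptree X).
Arguments Leaf {X} _.
Arguments Node {X} _.

Section TreeCount.
Variable X : countType.
Fixpoint ptree_enc (t : ptree X) : GenTree.tree X :=
  match t with Leaf x => GenTree.Leaf x | Node l => GenTree.Node 0 (map ptree_enc l) end.
Fixpoint ptree_dec (g : GenTree.tree X) : ptree X :=
  match g with GenTree.Leaf x => Leaf x | GenTree.Node _ l => Node (map ptree_dec l) end.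
Fixpoint ptree_encK (t : ptree X) : ptree_dec (ptree_enc t) = t :=
  match t return ptree_dec (ptree_enc t) = t with
  | Leaf x => erefl
  | Node l => f_equal Node
      ((fix go (l : seq (ptree X)) : map ptree_dec (map ptree_enc l) = l :=
          match l return map ptree_dec (map ptree_enc l) = l with
          | [::] => erefl
          | a :: l' => f_equal2 cons (ptree_encK a) (go l')
          end) l)
  end.
End TreeCount.

HB.instance Definition _ (X : countType) :=
  Countable.copy (ptree X) (can_type (@ptree_encK X)).

Section Trees.
Variable X : countType.

(** A monomial of K{X}_oo is [None] (the empty tree 1) or [Some t]. *)
Definition mono := option (ptree X).

Fixpoint reduced (t : ptree X) : bool :=
  match t with Leaf _ => true | Node l => (2 <= size l)%N && all reduced l end.
(** binary trees (basis of K{X}) *)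
Fixpoint binary (t : ptree X) : bool :=
  match t with Leaf _ => true | Node l => (size l == 2)%N && all binary l end.

Definition mono_reduced (m : mono) : bool :=
  if m is Some t then reduced t else true.
Definition mono_binary (m : mono) : bool :=
  if m is Some t then binary t else true.

(** number of leaves; leaves are identified with 0 .. nleaves-1 in planar
    (left-to-right) order *)
Fixpoint nleaves (t : ptree X) : nat :=
  match t with Leaf _ => 1%N | Node l => sumn (map nleaves l) end.

(** leaf restriction T|I, I given as a bit mask on the leaves (in order). *)
Fixpoint restr (t : ptree X) (m : seq bool) : option (ptree X) :=
  match t with
  | Leaf x => if head false m then Some (Leaf x) else None
  | Node l =>
      let cs := pmap id
        ((fix go (ls : seq (ptree X)) (m : seq bool) : seq (option (ptree X)) :=
            match ls with
            | [::] => [::]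
            | c :: ls' => restr c (take (nleaves c) m) :: go ls' (drop (nleaves c) m)
            end) l m) in
      if cs is [::] then None else Some (Node cs)
  end.

Fixpoint red (t : ptree X) : ptree X :=
  match t with
  | Leaf x => Leaf x
  | Node [:: c] => red c
  | Node l => Node (map red l)
  end.

Definition leaf_restr (T : ptree X) (S : {set 'I_(nleaves T)}) : mono :=
  restr T [seq i \in S | i <- enum 'I_(nleaves T)].

Definition mono_red (m : mono) : mono := omap red m.

(** grafting operator vee^k on monomials, with the unit conventions:
    arguments 1 are omitted, vee^1 = id, vee^k(1,..,1) = 1. *)
Definition graft (ms : seq mono) : mono :=
  match pmap id ms with
  | [::] => None
  | [:: t] => Some t
  | ts => Some (Node ts)
  end.

Variable K : fieldType.

(** Elements of K{X}_oo (x) K{X}_oo, whose basis is the set of pairs of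
    monomials, are represented by formal finite sums (lists of
    coefficient/basis-element pairs); [coef2 v p] is the coefficient of p. *)
Definition tens := seq (K * (mono * mono)).
Definition coef2 (v : tens) (p : mono * mono) : K :=
  \sum_(c <- v | c.2 == p) c.1.
Definition teq (v w : tens) : Prop := forall p, coef2 v p = coef2 w p.

Fixpoint cprod (A : Type) (ls : seq (seq A)) : seq (seq A) :=
  match ls with
  | [::] => [:: [::]]
  | l :: ls' => [seq x :: r | x <- l, r <- cprod ls']
  end.

(** vee^k on the tensor square, componentwise on pure tensors of
    monomials and extended multilinearly. *)
Definition tvee (vs : seq tens) : tens :=
  [seq (\prod_(c <- cs) c.1,
        (graft [seq c.2.1 | c <- cs], graft [seq c.2.2 | c <- cs]))
  | cs <- cprod vs].

(** D (given on the monomial basis, extended linearly) is the coproduct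
    Delta_a: unital, a homomorphism for every vee^k (k >= 2), and
    D(x) = x (x) 1 + 1 (x) x on the variables. *)
Definition is_Delta_a (D : mono -> tens) : Prop :=
  [/\ teq (D None) [:: (1, (None, None))],
      (forall x : X, teq (D (Some (Leaf x)))
          [:: (1, (Some (Leaf x), None)); (1, (None, Some (Leaf x)))]) &
      (forall ms : seq mono, (2 <= size ms)%N -> all mono_reduced ms ->
          teq (D (graft ms)) (tvee (map D ms)))].

Definition Delta_formula (T : ptree X) : tens :=
  [seq (1, (mono_red (@leaf_restr T J), mono_red (@leaf_restr T (~: J))))
  | J <- enum {set 'I_(nleaves T)}].

End Trees.

From HB Require Import structures.
From mathcomp Require Import all_boot all_order all_algebra.
Set Implicit Arguments. Unset Strict Implicit. Unset Printing Implicit Defensive.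
Import GRing.Theory.
Local Open Scope ring_scope.

(* Let Delta_sum m be the right-hand side sum_I red(m|I) (x) red(m|I^c) for
   any monomial m, leaf subsets I being encoded as bit masks.  A mask on the
   leaves of vee^k(m_1, ..., m_k) is the concatenation of masks on the leaves
   of the m_i, and restricting then reducing commutes with grafting: the unit
   conventions of vee^k absorb the empty restrictions, and red absorbs the
   unary vertex left when a single child survives.  Hence Delta_sum is itself
   a unital vee-homomorphism with x |-> x (x) 1 + 1 (x) x, which gives
   existence; any other such D agrees with it on reduced trees by induction,
   since a reduced tree is the graft of its (at least two) children.  Binary
   trees are reduced. *)

Section FormalSums.
Variable R : pzSemiRingType.

Definition fcoef (A : eqType) (v : seq (R * A)) (a : A) : R :=
  \sum_(c <- v | c.2 == a) c.1.

Lemma big_fcoef (A : eqType) (v : seq (R * A)) (U : seq A) (P : pred A) :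
  uniq U -> (forall c, c \in v -> c.2 \in U) ->
  \sum_(c <- v | P c.2) c.1 = \sum_(a <- U | P a) fcoef v a.
Proof.
move=> uU vU; rewrite /fcoef.
under [RHS]eq_bigr do rewrite big_mkcond.
rewrite exchange_big /= [LHS]big_mkcond /= big_seq [RHS]big_seq.
apply: eq_bigr => c /vU cU.
rewrite big_mkcond (bigD1_seq c.2) //= eqxx big1 ?addr0; first by case: (P c.2).
by move=> a /negbTE; rewrite eq_sym => ->; rewrite if_same.
Qed.

Lemma eq_fcoef_map (A B : eqType) (g : A -> B) (v w : seq (R * A)) :
  fcoef v =1 fcoef w ->
  fcoef [seq (c.1, g c.2) | c <- v] =1 fcoef [seq (c.1, g c.2) | c <- w].
Proof.
move=> vw b; rewrite /fcoef !big_map /=.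
have uU : uniq (undup (map snd (v ++ w))) by apply: undup_uniq.
rewrite !(big_fcoef (fun a => g a == b) uU) => [|c cw|c cv].
- by apply: eq_bigr => a _; rewrite vw.
- by rewrite mem_undup map_f // mem_cat cw orbT.
- by rewrite mem_undup map_f // mem_cat cv.
Qed.

Definition fcons_mul (A : Type) (v : seq (R * A)) (u : seq (R * seq A)) :
    seq (R * seq A) :=
  [seq (x.1 * y.1, x.2 :: y.2) | x <- v, y <- u].

Lemma fcoef_cons_mul (A : eqType) (v : seq (R * A)) u a l :
  fcoef (fcons_mul v u) (a :: l) = fcoef v a * fcoef u l.
Proof.
rewrite /fcoef big_mkcond big_allpairs_dep /=.
rewrite (big_mkcond (fun c : R * A => c.2 == a)) mulr_suml.
apply: eq_bigr => x _.
rewrite (big_mkcond (fun c : R * seq A => c.2 == l)) mulr_sumr.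
apply: eq_bigr => y _ /=.
rewrite eqseq_cons.
by case: (x.2 == a); case: (y.2 == l); rewrite ?mulr0 ?mul0r.
Qed.

Lemma fcoef_cons_mul_nil (A : eqType) (v : seq (R * A)) u :
  fcoef (fcons_mul v u) [::] = 0.
Proof.
by rewrite /fcoef big_mkcond big_allpairs_dep /= big1 // => x _; rewrite big1.
Qed.

Lemma eq_fcoef_cons_mul (A : eqType) (v v' : seq (R * A)) u u' :
  fcoef v =1 fcoef v' -> fcoef u =1 fcoef u' ->
  fcoef (fcons_mul v u) =1 fcoef (fcons_mul v' u').
Proof.
by move=> vv' uu' [|a l]; rewrite ?fcoef_cons_mul_nil ?fcoef_cons_mul ?vv' ?uu'.
Qed.

End FormalSums.

Fixpoint zip_with (A B C : Type) (f : A -> B -> C) (xs : seq A) (ys : seq B) :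
    seq C :=
  match xs, ys with
  | x :: xs', y :: ys' => f x y :: zip_with f xs' ys'
  | _, _ => [::]
  end.

Lemma map_zip_with (A B C D : Type) (g : C -> D) (f : A -> B -> C) xs ys :
  map g (zip_with f xs ys) = zip_with (fun x y => g (f x y)) xs ys.
Proof. by elim: xs ys => [|x xs IH] [|y ys] //=; rewrite IH. Qed.

Lemma zip_with_mapr (A B B' C : Type) (g : B' -> B) (f : A -> B -> C) xs ys :
  zip_with f xs (map g ys) = zip_with (fun x y => f x (g y)) xs ys.
Proof. by elim: xs ys => [|x xs IH] [|y ys] //=; rewrite IH. Qed.

Lemma cprod_map_zip_with (A B C : Type) (f : A -> B -> C) (L : A -> seq B) xs :
  cprod (map (fun x => map (f x) (L x)) xs) =
  map (zip_with f xs) (cprod (map L xs)).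
Proof.
elim: xs => [|x xs IH] //=.
by rewrite IH allpairs_mapl allpairs_mapr map_allpairs.
Qed.

Lemma pmap_id_omap (A B : Type) (f : A -> B) xs :
  pmap id (map (omap f) xs) = map f (pmap id xs).
Proof. by elim: xs => [|[x|] xs IH] //=; rewrite IH. Qed.

Fixpoint masks n : seq (seq bool) :=
  if n is n'.+1 then map (cons true) (masks n') ++ map (cons false) (masks n')
  else [:: [::]].

Lemma masksD a b : masks (a + b) = [seq x ++ y | x <- masks a, y <- masks b].
Proof.
elim: a => [|a IH] /=; first by rewrite cats0; elim: (masks b) => //= y l <-.
by rewrite IH allpairs_cat !allpairs_mapl !map_allpairs.
Qed.

Lemma mem_masks n b : (b \in masks n) = (size b == n).
Proof.
have mem_cons_map (y x : bool) s c :
    (x :: c \in map (cons y) s) = (x == y) && (c \in s).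
  by apply/mapP/andP => [[d ds [-> ->]]|[/eqP -> cs]]; [split|exists c].
elim: n b => [|n IH] [|x b] //=; rewrite mem_cat.
  by apply/negbTE/negP => /orP [] /mapP [].
by rewrite !mem_cons_map IH eqSS; case: x; rewrite /= ?orbF.
Qed.

Lemma masks_uniq n : uniq (masks n).
Proof.
elim: n => [|n IH] //=.
rewrite cat_uniq !map_inj_uniq ?IH //; try by move=> ? ? [].
by rewrite andbT /=; apply/hasPn => _ /mapP [r _ ->]; apply/mapP => [[r' _ []]].
Qed.

Section Grafting.
Variable X : countType.

Definition vee (ts : seq (ptree X)) : mono X :=
  match ts with
  | [::] => None
  | [:: t] => Some t
  | [:: t, t' & ts'] => Some (Node [:: t, t' & ts'])
  end.

Lemma graftE (ms : seq (mono X)) : graft ms = vee (pmap id ms).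
Proof. by []. Qed.

Definition mono_nleaves (m : mono X) : nat :=
  if m is Some t then nleaves t else 0.

Definition mono_restr (m : mono X) (b : seq bool) : mono X :=
  if m is Some t then restr t b else None.

Fixpoint restr_children (ts : seq (ptree X)) (b : seq bool) : seq (mono X) :=
  if ts is t :: ts' then
    restr t (take (nleaves t) b) :: restr_children ts' (drop (nleaves t) b)
  else [::].

Lemma restr_NodeE ts b : restr (Node ts) b =
  let cs := pmap id (restr_children ts b) in
  if cs is [::] then None else Some (Node cs).
Proof. by []. Qed.

Lemma restr_children_flatten ts bs : map size bs = map (@nleaves X) ts ->
  restr_children ts (flatten bs) = zip_with (@restr X) ts bs.
Proof.
elim: ts bs => [|t ts IH] [|b bs] //= [bt bts].
by rewrite take_size_cat // drop_size_cat // IH.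
Qed.

Lemma mono_red_Node (cs : seq (ptree X)) :
  mono_red (if cs is [::] then None else Some (Node cs)) =
  vee (map (@red X) cs).
Proof. by case: cs => [|c [|c' cs]]. Qed.

Lemma red_restr_vee ts bs : map size bs = map (@nleaves X) ts ->
  mono_red (mono_restr (vee ts) (flatten bs)) =
  vee (map (@red X) (pmap id (zip_with (@restr X) ts bs))).
Proof.
case: ts => [|t [|t' ts]] sizes.
- by case: bs sizes.
- case: bs sizes => [|b [|b' bs]] //= _; rewrite cats0.
  by case: (restr t b).
- rewrite -[mono_restr _ _]/(restr (Node [:: t, t' & ts]) (flatten bs)).
  by rewrite restr_NodeE restr_children_flatten // mono_red_Node.
Qed.

(* Monomials [None] have no leaves, so only the masks of the trees matter. *)
Fixpoint keep_some (ms : seq (mono X)) (bs : seq (seq bool)) : seq (seq bool) :=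
  match ms, bs with
  | Some _ :: ms', b :: bs' => b :: keep_some ms' bs'
  | None :: ms', _ :: bs' => keep_some ms' bs'
  | _, _ => [::]
  end.

Section KeepSome.
Variables (ms : seq (mono X)) (bs : seq (seq bool)).
Hypothesis sizes : map size bs = map mono_nleaves ms.

Lemma flatten_keep_some : flatten (keep_some ms bs) = flatten bs.
Proof.
elim: ms bs sizes => [|[t|] ms' IH] [|b bs'] //= [bm bms]; first by rewrite IH.
by case: b bm => //= _; rewrite IH.
Qed.

Lemma size_keep_some :
  map size (keep_some ms bs) = map (@nleaves X) (pmap id ms).
Proof.
by elim: ms bs sizes => [|[t|] ms' IH] [|b bs'] //= [bm bms]; rewrite IH // bm.
Qed.

Lemma pmap_zip_with_keep_some :
  pmap id (zip_with mono_restr ms bs) =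
  pmap id (zip_with (@restr X) (pmap id ms) (keep_some ms bs)).
Proof.
by elim: ms bs sizes => [|[t|] ms' IH] [|b bs'] //= [_ bms]; rewrite IH.
Qed.

End KeepSome.

Lemma red_restr_graft ms bs : map size bs = map mono_nleaves ms ->
  mono_red (mono_restr (graft ms) (flatten bs)) =
  graft (zip_with (fun m b => mono_red (mono_restr m b)) ms bs).
Proof.
move=> sizes.
rewrite graftE -(flatten_keep_some sizes) red_restr_vee ?size_keep_some //.
by rewrite graftE -map_zip_with pmap_id_omap pmap_zip_with_keep_some.
Qed.

Lemma mono_nleaves_graft (ms : seq (mono X)) :
  mono_nleaves (graft ms) = sumn (map mono_nleaves ms).
Proof.
have -> : sumn (map mono_nleaves ms) = sumn (map (@nleaves X) (pmap id ms)).
  by elim: ms => [|[t|] ms IH] //=; rewrite IH.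
by rewrite graftE; case: (pmap id ms) => [|t [|t' ts]] //=; rewrite addn0.
Qed.

End Grafting.

Section DeltaSum.
Variables (X : countType) (K : fieldType).

Definition split_term (m : mono X) (b : seq bool) : K * (mono X * mono X) :=
  (1, (mono_red (mono_restr m b), mono_red (mono_restr m (map negb b)))).

Definition Delta_sum (m : mono X) : tens X K :=
  map (split_term m) (masks (mono_nleaves m)).

Lemma masks_graft (ms : seq (mono X)) :
  masks (mono_nleaves (graft ms)) =
  map flatten (cprod (map (fun m => masks (mono_nleaves m)) ms)).
Proof.
rewrite mono_nleaves_graft; elim: ms => [|m ms IH] //=.
by rewrite masksD IH allpairs_mapr map_allpairs.
Qed.

Lemma size_mem_cprod_masks (ms : seq (mono X)) bs :
  bs \in cprod (map (fun m => masks (mono_nleaves m)) ms) ->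
  map size bs = map (@mono_nleaves X) ms.
Proof.
elim: ms bs => [|m ms IH] bs /=; first by rewrite inE => /eqP ->.
case/allpairsP => [[b bs'] /= [bm /IH <- ->]] /=.
by move: bm; rewrite mem_masks => /eqP ->.
Qed.

Lemma prod_split_terms ms bs : \prod_(c <- zip_with split_term ms bs) c.1 = 1.
Proof.
by elim: ms bs => [|m ms IH] [|b bs]; rewrite ?big_nil // big_cons IH mulr1.
Qed.

Lemma Delta_sum_graft (ms : seq (mono X)) :
  Delta_sum (graft ms) = tvee (map Delta_sum ms).
Proof.
rewrite /Delta_sum masks_graft /tvee (cprod_map_zip_with split_term) -!map_comp.
apply/eq_in_map => bs /size_mem_cprod_masks sizes /=.
have sizes_neg : map size (map (map negb) bs) = map (@mono_nleaves X) ms.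
  by rewrite -map_comp -sizes; apply: eq_map => b /=; rewrite size_map.
rewrite prod_split_terms !map_zip_with /split_term /= map_flatten.
by rewrite !red_restr_graft // zip_with_mapr.
Qed.

End DeltaSum.

Section TensorGraft.
Variables (X : countType) (K : fieldType).

(* [tvee] with the grafting postponed: the chosen pure tensors are kept. *)
Definition tvee_terms (vs : seq (tens X K)) : seq (K * seq (mono X * mono X)) :=
  [seq (\prod_(c <- cs) c.1, map snd cs) | cs <- cprod vs].

Lemma tveeE vs : tvee vs =
  [seq (c.1, (graft (map fst c.2), graft (map snd c.2))) | c <- tvee_terms vs].
Proof.
rewrite /tvee /tvee_terms -map_comp.
by apply: eq_map => cs /=; rewrite -!map_comp.
Qed.

Lemma tvee_terms_cons v vs : tvee_terms (v :: vs) = fcons_mul v (tvee_terms vs).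
Proof.
rewrite /tvee_terms /fcons_mul /= map_allpairs allpairs_mapr.
by apply: eq_allpairs => x y; rewrite big_cons.
Qed.

Lemma teq_tvee (f g : mono X -> tens X K) ms :
  (forall m, m \in ms -> teq (f m) (g m)) ->
  teq (tvee (map f ms)) (tvee (map g ms)).
Proof.
move=> fg p; rewrite !tveeE.
have eq_terms : fcoef (tvee_terms (map f ms)) =1 fcoef (tvee_terms (map g ms)).
  elim: ms fg => [|m ms IH] fg //=; rewrite !tvee_terms_cons.
  apply: eq_fcoef_cons_mul; first by apply: fg; rewrite inE eqxx.
  by apply: IH => m' m'ms; apply: fg; rewrite inE m'ms orbT.
exact: (eq_fcoef_map (fun l => (graft (map fst l), graft (map snd l)))
          eq_terms).
Qed.

End TensorGraft.

Section LeafSets.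
Variables (X : countType) (K : fieldType).

Definition mask_of n (J : {set 'I_n}) : seq bool :=
  [seq i \in J | i <- enum 'I_n].

Lemma mask_ofC n (J : {set 'I_n}) : mask_of (~: J) = map negb (mask_of J).
Proof. by rewrite /mask_of -map_comp; apply: eq_map => i /=; rewrite inE. Qed.

Lemma perm_mask_of n : perm_eq (map (@mask_of n) (enum {set 'I_n})) (masks n).
Proof.
apply: uniq_perm; last 1 first.
- move=> b; rewrite mem_masks; apply/mapP/idP => [[J _ ->]|/eqP bn].
    by rewrite /mask_of size_map size_enum_ord.
  exists [set i : 'I_n | nth false b i]; first by rewrite mem_enum.
  apply: (@eq_from_nth _ false); first by rewrite size_map size_enum_ord bn.
  move=> i; rewrite bn => lt_in.
  rewrite (nth_map (Ordinal lt_in)) -?enumT ?size_enum_ord //.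
  by rewrite -[i]/(nat_of_ord (Ordinal lt_in)) nth_ord_enum inE.
- rewrite map_inj_uniq ?enum_uniq // => J1 J2 eqJ; apply/setP => i.
  have := congr1 (fun s => nth false s i) eqJ.
  by rewrite !(nth_map i) -?enumT ?size_enum_ord ?nth_ord_enum.
- exact: masks_uniq.
Qed.

Lemma Delta_sum_formula (T : ptree X) :
  teq (Delta_sum K (Some T)) (Delta_formula K T).
Proof.
have -> : Delta_formula K T =
    map (split_term K (Some T)) (map (@mask_of _) (enum {set 'I_(nleaves T)})).
  rewrite /Delta_formula -map_comp; apply: eq_map => J.
  by rewrite /split_term /= -mask_ofC.
by move=> p; apply: perm_big; rewrite perm_map // perm_sym perm_mask_of.
Qed.

End LeafSets.

Section TreeInduction.
Variables (X : countType) (P : ptree X -> Prop).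
Hypothesis P_Leaf : forall x, P (Leaf x).
Hypothesis P_Node : forall ts, (forall t, t \in ts -> P t) -> P (Node ts).

Fixpoint ptree_mem_ind (t : ptree X) : P t :=
  match t with
  | Leaf x => P_Leaf x
  | Node ts => P_Node
      ((fix all_P (ts : seq (ptree X)) : forall s, s \in ts -> P s :=
          match ts return forall s, s \in ts -> P s with
          | [::] => fun s s_nil => False_ind _ (notF s_nil)
          | t :: ts' => fun s s_ts =>
              match elimT predU1P s_ts with
              | or_introl s_t => eq_ind_r P (ptree_mem_ind t) s_t
              | or_intror s_ts' => all_P ts' s s_ts'
              end
          end) ts)
  end.

End TreeInduction.

Lemma binary_reduced (X : countType) (T : ptree X) : binary T -> reduced T.
Proof.
elim/ptree_mem_ind: T => [//|ts IH] /= /andP [/eqP -> bin_ts] /=.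
by apply/allP => t t_ts; apply: IH t_ts (allP bin_ts t t_ts).
Qed.

Lemma graft_Node (X : countType) (ts : seq (ptree X)) :
  (2 <= size ts)%N -> graft (map Some ts) = Some (Node ts).
Proof.
rewrite graftE; have -> : pmap id (map Some ts) = ts by elim: ts => //= t ts ->.
by case: ts => [|t [|t' ts]].
Qed.

Lemma Delta_a_reduced (X : countType) (K : fieldType) (D : mono X -> tens X K) :
  is_Delta_a D ->
  forall T, reduced T -> teq (D (Some T)) (Delta_sum K (Some T)).
Proof.
case=> _ D_Leaf D_graft; elim/ptree_mem_ind => [x _|ts IH /andP [ts2 red_ts]].
  exact: D_Leaf.
rewrite -graft_Node // => p.
rewrite (D_graft _ _ _ p) ?size_map ?all_map // Delta_sum_graft.
apply: teq_tvee => _ /mapP [t t_ts ->].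
exact: IH t_ts (allP red_ts t t_ts).
Qed.

Unset Implicit Arguments.
Theorem proposition4p3p5 (K : fieldType) (hK : [pchar K] =i pred0)
    (X : countType) :
  (exists D : mono X -> tens X K, is_Delta_a D) /\
  (forall D : mono X -> tens X K, is_Delta_a D ->
     (forall T : ptree X, reduced T ->
        teq (D (Some T)) (@Delta_formula X K T)) /\
     (forall T : ptree X, binary T ->
        teq (D (Some T)) (@Delta_formula X K T))).
Proof.
split.
  exists (Delta_sum K); split => [p|x p|ms _ _]; rewrite ?Delta_sum_graft //.
move=> D DeltaD; split => T hT p.
  by rewrite (Delta_a_reduced DeltaD hT p) Delta_sum_formula.
by rewrite (Delta_a_reduced DeltaD (binary_reduced hT) p) Delta_sum_formula.
Qed.
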